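(* Fix a prime $p$ and let $\mathbb{L}_p(r)=|r|+\|r\|_p$ on $\mathbb{Z}[\tfrac1p]$. Then $\mathbb{Z}[\tfrac1p]$ has the property of bounded $p$-dilation with respect to $\mathbb{L}_p$. In particular, $\mathbb{L}_p$ is of bounded doubling with constant $C_{\mathbb{L}_p}=4p^8$, i.e. $|B_{\mathbb{L}_p}(2R)|\le 4p^8\,|B_{\mathbb{L}_p}(R)|$ for all $R\ge 1$.
   Context: $\mathbb{Z}[\tfrac1p]=\{a/p^k: a\in\mathbb{Z},k\in\mathbb{N}\}$ as an additive discrete group; $|r|$ is the absolute value and $\|\cdot\|_p$ is the $p$-adic norm ($\|0\|_p=0$, $\|r\|_p=p^{-n}$ if $r=ap^n/b$ with $a,b$ coprime to $p$ and to each other). For a length function $\mathbb{L}$ on a discrete group $\Gamma$, $B_{\mathbb{L}}(R)=\{\gamma:\mathbb{L}(\gamma)\le R\}$. $\mathbb{L}$ is proper if all $B_{\mathbb{L}}(R)$ are finite. $\Gamma$ has bounded ${\bf t}$-dilation ($\mathbf t>1$) with respect to $\mathbb{L}$ if $\mathbb{L}$ is proper and there is $K<\infty$ with $|B_{\mathbb{L}}(\mathbf tR)|\le K|B_{\mathbb{L}}(R)|$ for all $R\ge1$. $\mathbb{L}$ is of bounded doubling with constant $C$ if $\mathbb{L}$ is proper and $|B_{\mathbb{L}}(2R)|\le C|B_{\mathbb{L}}(R)|$ for all $R\ge1$. *)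

(* Z[1/p] realized as a subset of rat; radii are real
   (in an arbitrary realType R). *)
From HB Require Import structures.
From mathcomp Require Import all_boot all_order all_algebra.
From mathcomp Require Import reals.
Set Implicit Arguments. Unset Strict Implicit. Unset Printing Implicit Defensive.
Import Order.TTheory GRing.Theory Num.Theory.
Local Open Scope ring_scope.

Definition inZp (p : nat) (r : rat) : Prop :=
  exists (a : int) (k : nat), r = a%:~R / (p%:R ^+ k).

Definition pval (p : nat) (r : rat) : int :=
  (logn p `|numq r|%N)%:Z - (logn p `|denq r|%N)%:Z.

Definition padic_norm (p : nat) (r : rat) : rat :=
  if r == 0 then 0 else (p%:R : rat) ^ (- pval p r).

Definition Lp (p : nat) (r : rat) : rat := `|r| + padic_norm p r.

Definition ball (R : realType) (p : nat) (L : rat -> rat) (rad : R) (r : rat) : Prop :=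
  inZp p r /\ ratr (L r) <= rad.

Definition has_card (P : rat -> Prop) (n : nat) : Prop :=
  exists s : seq rat, [/\ uniq s, (forall x, x \in s <-> P x) & size s = n].

Definition proper_len (R : realType) (p : nat) (L : rat -> rat) : Prop :=
  forall rad : R, exists n, has_card (ball p L rad) n.

Definition bounded_dilation (R : realType) (p : nat) (L : rat -> rat) (t : R) : Prop :=
  proper_len R p L /\
  exists K : R, forall rad : R, 1 <= rad -> forall n m : nat,
    has_card (ball p L (t * rad)) n -> has_card (ball p L rad) m ->
    n%:R <= K * m%:R.

Definition bounded_doubling (R : realType) (p : nat) (L : rat -> rat) (C : R) : Prop :=
  proper_len R p L /\
  forall rad : R, 1 <= rad -> forall n m : nat,
    has_card (ball p L (2 * rad)) n -> has_card (ball p L rad) m ->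
    n%:R <= C * m%:R.

From Pilot Require Import Defs.
From HB Require Import structures.
From mathcomp Require Import all_boot all_order all_algebra.
From mathcomp Require Import reals zify lra.
Import Order.TTheory GRing.Theory Num.Theory.
Set Implicit Arguments.
Unset Strict Implicit.
Unset Printing Implicit Defensive.

Local Open Scope ring_scope.

(* Write a nonzero r in Z[1/p] as u p^z with u prime to p; then ||r||_p = p^-z.
   So if L_p(r) <= b < p^(J+1), then p^J r is an integer of absolute value at most
   b p^J, and for p^J <= b the ball B(b) has at most 2 b p^J + 1 <= 3 b^2 elements.
   Conversely every n / p^J with p^J <= b/2 and |n| <= (b/2) p^J lies in B(b);
   taking J maximal gives |B(b)| >= b^2 / (4p).  Balls thus grow quadratically,
   |B(t R)| <= 12 p t^2 |B(R)|, and t = p, t = 2 give bounded dilation and the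
   doubling constant 48 p <= 4 p^8. *)

Section PadicNorm.

Variable p : nat.
Hypothesis p_prime : prime p.

Let p_gt1 : 1 < p%:R :> rat.
Proof. by rewrite ltr1n prime_gt1. Qed.

Let p_neq0 : p%:R != 0 :> rat.
Proof. by rewrite pnatr_eq0 -lt0n prime_gt0. Qed.

Lemma padic_norm_ge0 (r : rat) : 0 <= padic_norm p r.
Proof. by rewrite /padic_norm; case: ifP => // _; rewrite exprz_ge0 ?ler0n. Qed.

Lemma padic_norm_coprimeXz (u z : int) :
  coprime p `|u| -> padic_norm p (u%:~R * p%:R ^ z) = p%:R ^ (- z).
Proof.
move=> cpu; have u_neq0 : u != 0.
  by apply: contraTneq cpu => ->; rewrite /coprime gcdn0 eqn_leq leqNgt prime_gt1 ?andbF.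
have logn_u : logn p `|u| = 0%N by apply: logn_coprime.
rewrite /padic_norm mulf_eq0 intr_eq0 (negbTE u_neq0) expfz_eq0 (negbTE p_neq0).
rewrite andbF /=; congr (_ ^ (- _)); rewrite /pval.
case: z => k.
  rewrite -exprnP -natrX -[(p ^ k)%:R]/(((p ^ k)%:Z)%:~R : rat) -intrM.
  rewrite numq_int denq_int abszM absz_nat logn1 subr0 lognM ?absz_gt0 ?expn_gt0 ?prime_gt0 //.
  by rewrite logn_u pfactorK.
have cpuk : coprime `|u| `|(p ^ k.+1)%:Z| by rewrite absz_nat coprimeXr // coprime_sym.
rewrite NegzE -exprnN -natrX -[(p ^ k.+1)%:R]/(((p ^ k.+1)%:Z)%:~R : rat).
rewrite coprimeq_num // coprimeq_den //.
rewrite gtr0_sg ?ltz_nat ?expn_gt0 ?prime_gt0 // mul1r logn_u.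
have pk_gt0 : (0 < p ^ k.+1)%N by rewrite expn_gt0 prime_gt0.
by rewrite eqz_nat gtn_eqF // gtr0_norm ?ltz_nat // absz_nat pfactorK ?sub0r.
Qed.

Lemma intr_divXn_coprime_factor (a : int) (k : nat) : a != 0 ->
  exists u (e : nat), coprime p `|u| /\
    a%:~R / (p%:R : rat) ^+ k = u%:~R * p%:R ^ (e%:Z - k%:Z).
Proof.
move=> a_neq0; have a_gt0 : (0 < `|a|)%N by rewrite absz_gt0.
have [q cpq def_a] := pfactor_coprime p_prime a_gt0.
set e := logn p `|a| in def_a *.
exists ((-1) ^+ (a < 0)%R * q%:Z), e; split.
  by rewrite abszM abszX /= exp1n mul1n.
rewrite expfzDr // -exprnN -exprnP mulrA; congr (_ / _).
by rewrite {1}[a]intEsign def_a PoszM mulrA rmorphM /= -natrX.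
Qed.

Lemma padic_norm_divXn_le (a : int) (k : nat) :
  padic_norm p (a%:~R / p%:R ^+ k) <= p%:R ^+ k.
Proof.
have [->|a_neq0] := eqVneq a 0.
  by rewrite mul0r /padic_norm eqxx exprn_ge0 ?ler0n.
have [u [e [cpu ->]]] := intr_divXn_coprime_factor k a_neq0.
by rewrite padic_norm_coprimeXz // exprnP ler_eXz2l //; lia.
Qed.

(* [Defs.inZp] is qualified because zmodp's [inZp] shadows it. *)
Lemma padic_norm_ltXS (J : nat) (r : rat) :
  Defs.inZp p r -> padic_norm p r < p%:R ^+ J.+1 ->
  exists n : int, r = n%:~R / p%:R ^+ J.
Proof.
move=> [a [k ->]]; have [->|a_neq0] := eqVneq a 0.
  by exists 0; rewrite !mul0r.
have [u [e [cpu ->]]] := intr_divXn_coprime_factor k a_neq0.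
rewrite padic_norm_coprimeXz // [_ ^+ J.+1]exprnP ltr_eXz2l // => ltkJ.
exists (u * (p ^ (J + e - k))%:Z).
rewrite rmorphM /= -mulrA -pmulrn natrX; congr (_ * _).
rewrite exprnN exprnP -expfzDr //; congr (_ ^ _); lia.
Qed.

End PadicNorm.

Lemma lt_expn_trunc_logS (R : archiRealDomainType) (q : nat) (x : R) :
  (1 < q)%N -> x < q%:R ^+ (trunc_log q (Num.truncn x)).+1.
Proof.
move=> q_gt1; apply: lt_le_trans (truncnS_gt x) _.
by rewrite -natrX ler_nat trunc_log_ltn.
Qed.

Lemma le_expn_trunc_log (R : archiRealDomainType) (q : nat) (x : R) :
  (1 < q)%N -> 1 <= x -> q%:R ^+ trunc_log q (Num.truncn x) <= x.
Proof.
move=> q_gt1 x_ge1; have x_ge0 : 0 <= x by apply: le_trans x_ge1.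
apply: le_trans (_ : (Num.truncn x)%:R <= x); last by rewrite truncn_le.
by rewrite -natrX ler_nat trunc_logP // truncn_gt0.
Qed.

Lemma has_card_leq_size (P : rat -> Prop) (n : nat) (s : seq rat) :
  has_card P n -> (forall x, P x -> x \in s) -> (n <= size s)%N.
Proof. by move=> [s0 [s0_uniq s0P <-]] Ps; apply: uniq_leq_size => // x /s0P/Ps. Qed.

Lemma size_leq_has_card (P : rat -> Prop) (m : nat) (s : seq rat) :
  uniq s -> (forall x, x \in s -> P x) -> has_card P m -> (size s <= m)%N.
Proof. by move=> s_uniq sP [s0 [_ s0P <-]]; apply: uniq_leq_size => // x /sP/s0P. Qed.

Definition grid (p J N : nat) : seq rat :=
  [seq (i%:Z - N%:Z)%:~R / (p%:R : rat) ^+ J | i <- iota 0 (2 * N).+1].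

Lemma size_grid (p J N : nat) : size (grid p J N) = (2 * N).+1.
Proof. by rewrite size_map size_iota. Qed.

Lemma grid_uniq (p J N : nat) : (0 < p)%N -> uniq (grid p J N).
Proof.
move=> p_gt0; rewrite map_inj_uniq ?iota_uniq // => i j /=.
have pJ_neq0 : (p%:R : rat) ^+ J != 0 by rewrite expf_neq0 // pnatr_eq0 -lt0n.
by move/(mulIf (invr_neq0 pJ_neq0))/intr_inj => /eqP; rewrite subr_eq addrNK eqz_nat => /eqP.
Qed.

Lemma mem_gridP (p J N : nat) (x : rat) :
  x \in grid p J N <-> exists2 n : int, (`|n| <= N)%N & x = n%:~R / p%:R ^+ J.
Proof.
split=> [/mapP[i] | [n le_nN ->]].
  by rewrite mem_iota add0n => lt_i2N ->; exists (i%:Z - N%:Z) => //; lia.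
apply/mapP; exists (absz (n + N%:Z)); first by rewrite mem_iota add0n; lia.
by congr (_%:~R / _); lia.
Qed.

Section Balls.

Variables (R : realType) (p : nat).
Hypothesis p_prime : prime p.

Local Notation B := (@ball R p (Lp p)).

Lemma normr_ratr_intr_divXn (n : int) (J : nat) :
  `|ratr (n%:~R / (p%:R : rat) ^+ J)| = `|n|%:R / p%:R ^+ J :> R.
Proof.
rewrite fmorph_div rmorphXn /= ratr_int ratr_nat normrM normfV normrX normr_nat.
by rewrite -intr_norm -natr_absz.
Qed.

Lemma ball_sub_grid (b : R) (J : nat) :
  b < p%:R ^+ J.+1 -> forall r, B b r -> r \in grid p J (Num.truncn (b * p%:R ^+ J)).
Proof.
move=> lt_b_pJS r [Zr]; rewrite /Lp rmorphD /= ratr_norm => Lr_le_b.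
have norm_ge0 : 0 <= ratr (padic_norm p r) :> R by rewrite ler0q padic_norm_ge0.
have abs_le_b : `|ratr r| <= b by apply: le_trans Lr_le_b; rewrite lerDl.
have [n def_r] : exists n : int, r = n%:~R / p%:R ^+ J.
  apply: padic_norm_ltXS => //; rewrite -(ltr_rat R) rmorphXn /= ratr_nat.
  by apply: le_lt_trans lt_b_pJS; apply: le_trans Lr_le_b; rewrite lerDr.
apply/mem_gridP; exists n => //; rewrite truncn_ge_nat; last first.
  by rewrite mulr_ge0 ?exprn_ge0 ?ler0n // (le_trans _ abs_le_b).
move: abs_le_b; rewrite def_r normr_ratr_intr_divXn.
by rewrite ler_pdivrMr ?exprn_gt0 ?ltr0n ?prime_gt0.
Qed.

Lemma grid_sub_ball (b : R) (J : nat) :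
  p%:R ^+ J <= b / 2 -> forall x, x \in grid p J (Num.truncn (b / 2 * p%:R ^+ J)) -> B b x.
Proof.
move=> pJ_le_b2 x /mem_gridP[n le_n_trunc ->]; split; first by exists n, J.
have pJ_gt0 : 0 < p%:R ^+ J :> R by rewrite exprn_gt0 ?ltr0n ?prime_gt0.
rewrite /Lp rmorphD /= (splitr b) lerD //.
  rewrite ratr_norm normr_ratr_intr_divXn ler_pdivrMr //.
  apply: le_trans (_ : (Num.truncn (b / 2 * p%:R ^+ J))%:R <= _); first by rewrite ler_nat.
  by rewrite truncn_le mulr_ge0 ?(ltW pJ_gt0) // (le_trans (ltW pJ_gt0)).
apply: le_trans pJ_le_b2.
by have := padic_norm_divXn_le p_prime n J; rewrite -(ler_rat R) rmorphXn /= ratr_nat.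
Qed.

Lemma card_ball_le (b : R) (n : nat) : 1 <= b -> has_card (B b) n -> n%:R <= 3 * b ^+ 2.
Proof.
move=> b_ge1 card_n; set J := trunc_log p (Num.truncn b).
have pJ_le_b : p%:R ^+ J <= b by apply: le_expn_trunc_log; rewrite ?prime_gt1.
have pJ_ge0 : 0 <= p%:R ^+ J :> R by rewrite exprn_ge0.
have := has_card_leq_size card_n (ball_sub_grid (lt_expn_trunc_logS b (prime_gt1 p_prime))).
rewrite size_grid -(ler_nat R) => /le_trans; apply.
have trunc_le : (Num.truncn (b * p%:R ^+ J))%:R <= b * p%:R ^+ J.
  by rewrite truncn_le mulr_ge0 // (le_trans _ b_ge1).
rewrite -addn1 natrD natrM; nra.
Qed.

Lemma card_ball_ge (b : R) (m : nat) : 1 <= b -> has_card (B b) m -> b ^+ 2 <= 4 * p%:R * m%:R.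
Proof.
move=> b_ge1 card_m.
have m_ge1 : 1 <= m%:R :> R.
  rewrite ler1n; apply: (size_leq_has_card (s := [:: 0]) _ _ card_m) => // x.
  rewrite inE => /eqP ->.
  split; first by exists 0, 0%N; rewrite mul0r.
  by rewrite /Lp /padic_norm eqxx normr0 addr0 rmorph0 (le_trans _ b_ge1).
have [b_lt2 | b_ge2] := ltP b 2.
  have pm_ge1 : 1 <= p%:R * m%:R :> R by rewrite mulr_ege1 // ler1n prime_gt0.
  rewrite expr2; nra.
set J := trunc_log p (Num.truncn (b / 2)); set M := Num.truncn (b / 2 * p%:R ^+ J).
have pJ_le_b2 : p%:R ^+ J <= b / 2 by apply: le_expn_trunc_log; rewrite ?prime_gt1 //; lra.
have b2_lt_pJS : b / 2 < p%:R * p%:R ^+ J.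
  by rewrite -exprS; apply: lt_expn_trunc_logS; rewrite prime_gt1.
have M_gt : b / 2 * p%:R ^+ J < M.+1%:R by apply: truncnS_gt.
have M1_le_m : M.+1%:R <= m%:R :> R.
  have grid_uniq_JM := grid_uniq J M (prime_gt0 p_prime).
  have := size_leq_has_card grid_uniq_JM (grid_sub_ball pJ_le_b2) card_m.
  by rewrite size_grid ler_nat; lia.
have b2_sq_le : b / 2 * (b / 2) <= b / 2 * (p%:R * p%:R ^+ J).
  by rewrite ler_wpM2l ?ltW //; lra.
have pM_le_pm : p%:R * (b / 2 * p%:R ^+ J) <= p%:R * m%:R.
  by rewrite ler_wpM2l ?ler0n // (le_trans (ltW M_gt)).
rewrite expr2; nra.
Qed.

Lemma card_ball_dilate (t rad : R) (n m : nat) : 1 <= t -> 1 <= rad ->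
  has_card (B (t * rad)) n -> has_card (B rad) m ->
  n%:R <= 12 * p%:R * t ^+ 2 * m%:R.
Proof.
move=> t_ge1 rad_ge1 card_n card_m.
have trad_ge1 : 1 <= t * rad by rewrite mulr_ege1.
have := card_ball_le trad_ge1 card_n; rewrite exprMn => /le_trans; apply.
have rad_le := card_ball_ge rad_ge1 card_m.
have t2_ge0 : 0 <= t ^+ 2 by rewrite exprn_ge0 // (le_trans _ t_ge1).
nra.
Qed.

Lemma proper_Lp : proper_len R p (Lp p).
Proof.
move=> rad; set J := trunc_log p (Num.truncn rad).
set s := [seq x <- grid p J (Num.truncn (rad * p%:R ^+ J)) | ratr (Lp p x) <= rad].
exists (size s), s; split => //; first by rewrite filter_uniq // grid_uniq ?prime_gt0.
move=> x; rewrite mem_filter; split.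
  by move=> /andP[Lx_le /mem_gridP[n _ def_x]]; split; first by exists n, J.
move=> Bx; rewrite (ball_sub_grid (lt_expn_trunc_logS rad (prime_gt1 p_prime)) Bx) andbT.
by case: Bx.
Qed.

End Balls.

Theorem lemma3p6 (R : realType) (p : nat) (hp : prime p) :
  bounded_dilation p (Lp p) (p%:R : R) /\
  bounded_doubling p (Lp p) (4 * (p%:R : R) ^+ 8).
Proof.
have p_ge2 : 2 <= p%:R :> R by rewrite ler_nat prime_gt1.
split; split; try exact: proper_Lp.
  exists (12 * p%:R ^+ 3) => rad rad_ge1 n m card_n card_m.
  apply: le_trans (card_ball_dilate hp _ rad_ge1 card_n card_m) _; first lra.
  by rewrite -(mulrA 12) -exprS.
move=> rad rad_ge1 n m card_n card_m.
apply: le_trans (card_ball_dilate hp _ rad_ge1 card_n card_m) _; first lra.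
rewrite ler_wpM2r // (exprS _ 7).
have : (2 ^ 7 <= p ^ 7)%N by rewrite leq_exp2r // prime_gt1.
rewrite -(ler_nat R) !natrX; nra.
Qed.
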